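(* Let $G=(V,D,B)$ be a mixed graph, $v\in V$, and $Y\subseteq V\setminus(\{v\}\cup\mathrm{sib}(v))$ with $|Y|=|\mathrm{pa}(v)|$. For $(\Lambda,\Omega)\in\Theta$ with $\Sigma=\phi_G(\Lambda,\Omega)$ let $\mathbf{J}=[(I-\Lambda)^T\Sigma]_{Y,\mathrm{pa}(v)}$ (the submatrix with rows $Y$ and columns $\mathrm{pa}(v)$). If $\mathbf{J}$ is generically invertible, i.e. $\det\mathbf{J}$ is not identically zero as a function of $(\Lambda,\Omega)\in\Theta$, then $Y$ satisfies the half-trek criterion with respect to $v$.
   Context: A mixed graph is $G=(V,D,B)$ with $V=[m]$, $D$ directed edges $v\to w$, $B$ symmetric bidirected edges $v\leftrightarrow w$, no self-loops. $\mathrm{pa}(v)=\{w:w\to v\in D\}$, $\mathrm{sib}(v)=\{w:w\leftrightarrow v\in B\}$. $\mathbb{R}^D_{\mathrm{reg}}$: real $m\times m$ $\Lambda$ with $\lambda_{vw}=0$ for $v\to w\notin D$ and $I-\Lambda$ invertible; $\mathrm{PD}(B)$: positive definite symmetric $\Omega$ with $\omega_{vw}=0$ for $v\ne w$, $v\leftrightarrow w\notin B$; $\Theta=\mathbb{R}^D_{\mathrm{reg}}\times\mathrm{PD}(B)$; $\phi_G(\Lambda,\Omega)=(I-\Lambda)^{-T}\Omega(I-\Lambda)^{-1}$. A half-trek from $y$ to $w$ is a path $y\leftrightarrow w_0\to w_1\to\cdots\to w_r=w$ (left side $\{y\}$, right side $\{w_0,\dots,w_r\}$) or $y\to w_1\to\cdots\to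 w_r=w$, $r\ge0$ (left side $\{y\}$, right side $\{y,w_1,\dots,w_r\}$); nodes may repeat. A system of half-treks from $X$ to $Y$: half-treks with distinct sources forming $X$ and distinct targets forming $Y$; no sided intersection: pairwise disjoint left sides and pairwise disjoint right sides. $Y$ satisfies the half-trek criterion w.r.t. $v$ if $|Y|=|\mathrm{pa}(v)|$, $Y\cap(\{v\}\cup\mathrm{sib}(v))=\emptyset$, and there is a system of half-treks with no sided intersection from $Y$ to $\mathrm{pa}(v)$. *)

From HB Require Import structures.
From mathcomp Require Import all_boot all_order all_algebra.
Set Implicit Arguments. Unset Strict Implicit. Unset Printing Implicit Defensive.
Import Order.TTheory GRing.Theory Num.Theory.

(* Vertices are 'I_m.  A mixed graph G = (V, D, B) is given by two relations:
   [D a b] means the directed edge a -> b is in D,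
   [B a b] means the bidirected edge a <-> b is in B. *)
Definition mixed_graph (m : nat) (D B : rel 'I_m) : Prop :=
  irreflexive D /\ irreflexive B /\ symmetric B.

Definition pa (m : nat) (D : rel 'I_m) (v : 'I_m) : {set 'I_m} :=
  [set w | D w v].
Definition sib (m : nat) (B : rel 'I_m) (v : 'I_m) : {set 'I_m} :=
  [set w | B w v].

(* A half-trek from y to w is encoded by its source y and the sequence rs
   of its right-side nodes, in order:
   - y <-> w0 -> w1 -> ... -> wr = w   is encoded by rs = [:: w0; ...; wr]
     (first node a sibling of y);
   - y -> w1 -> ... -> wr = w (r >= 0) is encoded by rs = [:: y; w1; ...; wr]
     (first node equal to y).
   Since B is irreflexive, the two cases are distinguished by the head. *)
Definition is_halftrek (m : nat) (D B : rel 'I_m) (y w : 'I_m)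
    (rs : seq 'I_m) : bool :=
  match rs with
  | [::] => false
  | h :: t => ((h == y) || B y h) && path D h t && (last h t == w)
  end.

Definition left_side (m : nat) (y : 'I_m) : {set 'I_m} := [set y].
Definition right_side (m : nat) (rs : seq 'I_m) : {set 'I_m} :=
  [set x in rs].

Definition system_no_sided_intersection (m : nat) (D B : rel 'I_m)
    (X Y : {set 'I_m}) : Prop :=
  exists (tgt : 'I_m -> 'I_m) (rs : 'I_m -> seq 'I_m),
    [/\ (forall y, y \in X -> is_halftrek D B y (tgt y) (rs y)),
        {in X &, injective tgt},
        tgt @: X = Y,
        (forall y1 y2, y1 \in X -> y2 \in X -> y1 != y2 ->
           [disjoint left_side y1 & left_side y2]) &
        (forall y1 y2, y1 \in X -> y2 \in X -> y1 != y2 ->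
           [disjoint right_side (rs y1) & right_side (rs y2)])].

Definition htc (m : nat) (D B : rel 'I_m) (Y : {set 'I_m}) (v : 'I_m) : Prop :=
  [/\ #|Y| = #|pa D v|,
      Y :&: (v |: sib B v) = set0 &
      system_no_sided_intersection D B Y (pa D v)].

Local Open Scope ring_scope.

Definition RDreg (R : realFieldType) (m : nat) (D : rel 'I_m)
    (L : 'M[R]_m) : Prop :=
  (forall a b, ~~ D a b -> L a b = 0) /\ (1%:M - L) \in unitmx.

Definition PDB (R : realFieldType) (m : nat) (B : rel 'I_m)
    (O : 'M[R]_m) : Prop :=
  [/\ O^T = O,
      (forall a b, a != b -> ~~ B a b -> O a b = 0) &
      (forall x : 'cV[R]_m, x != 0 -> 0 < (x^T *m O *m x) 0 0)].

Definition Theta (R : realFieldType) (m : nat) (D B : rel 'I_m)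
    (L O : 'M[R]_m) : Prop := RDreg D L /\ PDB B O.

Definition phiG (R : realFieldType) (m : nat) (L O : 'M[R]_m) : 'M[R]_m :=
  (invmx (1%:M - L))^T *m O *m invmx (1%:M - L).

(* J = [(I - L)^T Sigma]_{Y, pa(v)}, as a square matrix of size #|pa v|
   (used when #|Y| = #|pa v|): rows indexed by the elements of Y and columns
   by the elements of pa(v), both in increasing order (v is only a dummy
   default, never used when #|Y| = #|pa v|). *)
Definition Jmat (R : realFieldType) (m : nat) (D : rel 'I_m) (v : 'I_m)
    (Y : {set 'I_m}) (L O : 'M[R]_m) : 'M[R]_#|pa D v| :=
  let M := (1%:M - L)^T *m phiG L O in
  \matrix_(i < #|pa D v|, j < #|pa D v|)
     M (nth v (enum Y) i) (nth v (enum (pa D v)) j).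

Definition generically_invertible_J (R : realFieldType) (m : nat)
    (D B : rel 'I_m) (v : 'I_m) (Y : {set 'I_m}) : Prop :=
  ~ (forall L O : 'M[R]_m, Theta D B L O -> \det (Jmat D v Y L O) = 0).

From HB Require Import structures.
From mathcomp Require Import all_boot all_order all_algebra all_fingroup.
From mathcomp Require Import zify.
From Stdlib Require Import Classical_Prop.
Set Implicit Arguments. Unset Strict Implicit. Unset Printing Implicit Defensive.
Import Order.TTheory GRing.Theory Num.Theory.

(* Since (I - L)^T Sigma = O (I - L)^{-1}, we have J = W A^{-1} E with
   A = I - L, W the rows Y of O and E the 0/1 selector of the columns pa(v).
   By the Schur complement, det J != 0 at some point of Theta forces the
   block matrix M = [[A, E], [W, 0]] to be invertible, so some permutation s
   of the indices of M meets only nonzero entries of M.  The support pattern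
   of Theta translates the nonzero entries of M into graph edges: A gives
   directed edges (or fixed points), W joins y to y itself or to a sibling,
   E marks the parents of v.  Following s from the row of y in Y
   through the upper block until it first leaves it (an "excursion") yields
   a half-trek from y to a parent of v; distinct excursions of a permutation
   never meet, which gives the absence of sided intersection. *)

(* Excursions of an injective map f of a finite type through a set [inner]:
   the excursion from z lasts until the iterates of z first lie outside
   [inner] again (or for a full cycle, if they never do). *)
Section Excursion.

Variables (T : finType) (f : T -> T) (inner : pred T).
Hypothesis f_inj : injective f.

Definition returns_at (z : T) (i : nat) : bool :=
  (0 < i) && ((iter i f z \notin inner) || (i == fingraph.order f z)).

Lemma returns_at_order (z : T) : returns_at z (fingraph.order f z).
Proof. by rewrite /returns_at fingraph.order_gt0 eqxx orbT. Qed.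

Definition excursion_length (z : T) : nat :=
  ex_minn (ex_intro (returns_at z) _ (returns_at_order z)).

Lemma excursion_length_gt0 (z : T) : 0 < excursion_length z.
Proof. by rewrite /excursion_length; case: ex_minnP => i /andP[]. Qed.

Lemma excursion_exit (z : T) :
  z \notin inner -> iter (excursion_length z) f z \notin inner.
Proof.
move=> zout; rewrite /excursion_length.
case: ex_minnP => i /andP[_ /orP[//|/eqP ->]] _.
by rewrite iter_order.
Qed.

Lemma excursion_inner (z : T) (i : nat) :
  0 < i -> i < excursion_length z -> iter i f z \in inner.
Proof.
move=> i_gt0; rewrite /excursion_length; case: ex_minnP => r _ rmin lt_ir.
apply: contraLR lt_ir => iout.
by rewrite -leqNgt rmin // /returns_at i_gt0 iout.
Qed.

Lemma iter_inj (k : nat) : injective (iter k f).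
Proof. by elim: k => [//|k IHk] x y /= /f_inj; apply: IHk. Qed.

(* The ordered case of excursion_uniq: if i <= j, going back i steps
   shows that z is visited by the excursion from z' at time j - i. *)
Lemma excursion_uniq_le (z z' : T) (i j : nat) :
    z \notin inner -> 0 < i -> i <= j -> j <= excursion_length z' ->
  iter i f z = iter j f z' -> z = z' /\ i = j.
Proof.
move=> zout i_gt0 le_ij le_j Eij.
have Ez : z = iter (j - i) f z'.
  by apply: (@iter_inj i); rewrite Eij -iterD subnKC.
case: (posnP (j - i)) => [ji0|ji_gt0].
  by move: Ez; rewrite ji0 => ->; split=> //; lia.
have : iter (j - i) f z' \in inner by apply: excursion_inner => //; lia.
by rewrite -Ez (negbTE zout).
Qed.

Lemma excursion_uniq (z z' : T) (i j : nat) :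
    z \notin inner -> z' \notin inner ->
    0 < i -> i <= excursion_length z -> 0 < j -> j <= excursion_length z' ->
  iter i f z = iter j f z' -> z = z' /\ i = j.
Proof.
move=> zout z'out i_gt0 le_i j_gt0 le_j Eij.
case: (leqP i j) => [le_ij|lt_ji]; first exact: excursion_uniq_le Eij.
by have [-> ->] := excursion_uniq_le z'out j_gt0 (ltnW lt_ji) le_i (esym Eij).
Qed.

End Excursion.

Lemma path_map_iota (U : Type) (e : rel U) (f : nat -> U) (a c : nat) :
    (forall i, a <= i < a + c -> e (f i) (f i.+1)) ->
  path e (f a) [seq f i | i <- iota a.+1 c].
Proof.
elim: c a => [//|c IHc] a step /=.
rewrite step ?leqnn ?addnS ?ltnS ?leq_addr //=.
by apply: IHc => i /andP[lt_ai le_ic]; apply: step; rewrite ltnW // -addSnnS.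
Qed.

Lemma last_map_iota (U : Type) (f : nat -> U) (a c : nat) :
  last (f a) [seq f i | i <- iota a.+1 c] = f (a + c).
Proof. by elim: c a => [|c IHc] a /=; rewrite ?addn0 // IHc addSnnS. Qed.

Definition enum_at (m : nat) (v : 'I_m) (S : {set 'I_m}) (n : nat) (k : 'I_n)
    : 'I_m :=
  nth v (enum S) k.
Arguments enum_at {m} v S {n} k.

(* A permutation s of 'I_(m + n), split into an upper block 'I_m (the
   vertices) and a lower block 'I_n (the elements of Y), whose steps follow
   the graph as described by the hypotheses below, yields a system of
   half-treks with no sided intersection from Y to P. *)
Section HalfTrekSystemOfPermutation.

Variables (m n : nat) (D B : rel 'I_m) (v : 'I_m) (Y P : {set 'I_m}).
Hypotheses (cardY : #|Y| = n) (cardP : #|P| = n).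
Variable s : {perm 'I_(m + n)}.

Hypothesis s_upper : forall x x' : 'I_m,
  s (lshift n x) = lshift n x' -> x = x' \/ D x x'.
Hypothesis s_leave : forall (x : 'I_m) (j : 'I_n),
  s (lshift n x) = rshift m j -> x \in P.
Hypothesis s_enter : forall j : 'I_n, exists2 x : 'I_m,
  s (rshift m j) = lshift n x &
  (x == enum_at v Y j) || B (enum_at v Y j) x.

Let upper : pred 'I_(m + n) := fun z => z < m.

Definition node (z : 'I_(m + n)) : 'I_m := if split z is inl x then x else v.

Lemma node_lshift (x : 'I_m) : node (lshift n x) = x.
Proof. by rewrite /node -[lshift n x]/(unsplit (inl _ x)) unsplitK. Qed.

Lemma nodeK (z : 'I_(m + n)) : z < m -> lshift n (node z) = z.
Proof. by rewrite /node; case: split_ordP => // x ->. Qed.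

Lemma lower_rshift (z : 'I_(m + n)) : m <= z -> exists j : 'I_n, z = rshift m j.
Proof.
case: (split_ordP z) => [x -> | j ->]; last by exists j.
by rewrite /= leqNgt ltn_ord.
Qed.

Definition start (y : 'I_m) : 'I_(m + n) :=
  insubd (lshift n v) (m + index y (enum Y)).

Lemma start_rshift (y : 'I_m) :
  y \in Y -> exists2 j : 'I_n, start y = rshift m j & enum_at v Y j = y.
Proof.
move=> yY; have lt_yn : index y (enum Y) < n.
  by rewrite -cardY cardE index_mem mem_enum.
exists (Ordinal lt_yn); last by rewrite /enum_at /= nth_index ?mem_enum.
by apply: val_inj; rewrite /start val_insubd /= ltn_add2l lt_yn.
Qed.

Lemma start_lower (y : 'I_m) : y \in Y -> start y \notin upper.
Proof.
by case/start_rshift=> j -> _; rewrite unfold_in /upper /= -leqNgt leq_addr.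
Qed.

Lemma start_inj : {in Y &, injective start}.
Proof.
move=> y1 y2 /start_rshift[j1 -> <-] /start_rshift[j2 -> <-].
by move/rshift_inj ->.
Qed.

(* The half-trek from y: the upper nodes visited by the excursion of s
   starting at the lower row of y. *)
Definition excursion_len (y : 'I_m) : nat := excursion_length s upper (start y).
Definition visit (y : 'I_m) (i : nat) : 'I_m := node (iter i s (start y)).
Definition trek (y : 'I_m) : seq 'I_m :=
  [seq visit y i | i <- iota 1 (excursion_len y).-1].
Definition target (y : 'I_m) : 'I_m := visit y (excursion_len y).-1.

Lemma first_step (y : 'I_m) :
  y \in Y -> exists2 x, s (start y) = lshift n x & (x == y) || B y x.
Proof. by case/start_rshift=> j -> <-; apply: s_enter. Qed.

Lemma excursion_len_gt1 (y : 'I_m) : y \in Y -> 1 < excursion_len y.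
Proof.
move=> yY; have := excursion_length_gt0 s upper (start y).
rewrite leq_eqVlt => /orP[/eqP len1|//].
have := excursion_exit (@perm_inj _ s) (start_lower yY).
have [x sy _] := first_step yY.
by rewrite -len1 /= sy unfold_in /upper /= ltn_ord.
Qed.

Lemma visitK (y : 'I_m) (i : nat) :
  0 < i < excursion_len y -> lshift n (visit y i) = iter i s (start y).
Proof.
by case/andP=> i_gt0 lt_i; apply/nodeK; have := excursion_inner i_gt0 lt_i.
Qed.

Lemma visit_uniq (y1 y2 : 'I_m) (i j : nat) :
    y1 \in Y -> y2 \in Y ->
    0 < i < excursion_len y1 -> 0 < j < excursion_len y2 ->
  visit y1 i = visit y2 j -> y1 = y2 /\ i = j.
Proof.
move=> y1Y y2Y hi hj /(congr1 (lshift n)); rewrite !visitK // => Eij.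
case/andP: hi => i_gt0 /ltnW le_i; case/andP: hj => j_gt0 /ltnW le_j.
have [/start_inj -> //] :=
  excursion_uniq (@perm_inj _ s) (start_lower y1Y) (start_lower y2Y)
    i_gt0 le_i j_gt0 le_j Eij.
Qed.

Lemma trek_halftrek (y : 'I_m) :
  y \in Y -> is_halftrek D B y (target y) (trek y).
Proof.
move=> yY; have len_gt1 := excursion_len_gt1 yY.
have -> : trek y =
    visit y 1 :: [seq visit y i | i <- iota 2 (excursion_len y - 2)].
  rewrite /trek; case: (excursion_len y) len_gt1 => [|[|c]] // _.
  by rewrite subn2.
rewrite /is_halftrek -andbA; apply/and3P; split.
- have [x sy yx] := first_step yY.
  by rewrite /visit /= sy node_lshift.
- apply: (path_map_iota (f := visit y)) => i /andP[i_gt0 lt_i].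
  have [Eii'|//] : visit y i = visit y i.+1 \/ D (visit y i) (visit y i.+1).
    by apply: s_upper; rewrite !visitK ?i_gt0 //=; lia.
  have [_ Sii] :=
    visit_uniq yY yY (i := i) (j := i.+1) ltac:(lia) ltac:(lia) Eii'.
  lia.
- by rewrite (last_map_iota (visit y)) /target; apply/eqP; congr visit; lia.
Qed.

Lemma target_in (y : 'I_m) : y \in Y -> target y \in P.
Proof.
move=> yY; have len_gt1 := excursion_len_gt1 yY.
have := excursion_exit (@perm_inj _ s) (start_lower yY).
rewrite -/(excursion_len y) -(prednK (ltnW len_gt1)) iterS -visitK; last by lia.
rewrite unfold_in /upper /= -leqNgt => /lower_rshift[j]; exact: s_leave.
Qed.

Lemma target_inj : {in Y &, injective target}.
Proof.
move=> y1 y2 y1Y y2Y Et.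
have len1 := excursion_len_gt1 y1Y; have len2 := excursion_len_gt1 y2Y.
by have [] := visit_uniq y1Y y2Y (i := (excursion_len y1).-1)
  (j := (excursion_len y2).-1) ltac:(lia) ltac:(lia) Et.
Qed.

Lemma treks_disjoint (y1 y2 : 'I_m) :
  y1 \in Y -> y2 \in Y -> y1 != y2 ->
  [disjoint right_side (trek y1) & right_side (trek y2)].
Proof.
move=> y1Y y2Y y12; apply/pred0P => x /=; rewrite !inE; apply/negP.
case/andP=> /mapP[i + ->] /mapP[j + Eij]; rewrite !mem_iota => hi hj.
have len1 := excursion_len_gt1 y1Y; have len2 := excursion_len_gt1 y2Y.
have [y1y2 _] := visit_uniq y1Y y2Y (i := i) (j := j) ltac:(lia) ltac:(lia) Eij.
by rewrite y1y2 eqxx in y12.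
Qed.

Theorem halftrek_system_of_permutation : system_no_sided_intersection D B Y P.
Proof.
exists target, trek; split.
- exact: trek_halftrek.
- exact: target_inj.
- apply/eqP; rewrite eqEcard (card_in_imset target_inj) cardY cardP leqnn andbT.
  by apply/subsetP=> _ /imsetP[y yY ->]; apply: target_in.
- by move=> y1 y2 _ _ y12; rewrite disjoint_sym disjoints1 inE eq_sym.
- exact: treks_disjoint.
Qed.

End HalfTrekSystemOfPermutation.

Local Open Scope ring_scope.

Lemma det_block_schur (F : fieldType) (m n : nat) (A : 'M[F]_m)
    (E : 'M_(m, n)) (W : 'M_(n, m)) :
  A \in unitmx ->
  \det (block_mx A E W 0) = \det A * ((-1) ^+ n * \det (W *m invmx A *m E)).
Proof.
move=> unitA.
have elim_W : block_mx 1%:M 0 (- (W *m invmx A)) 1%:M *m block_mx A E W 0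
    = block_mx A E 0 (- (W *m invmx A *m E)).
  rewrite mulmx_block !mul1mx !mul0mx !addr0 !mulNmx -[W *m _ *m A]mulmxA.
  by rewrite mulVmx // mulmx1 addNr.
have := congr1 determinant elim_W.
by rewrite det_mulmx det_lblock !det1 !mul1r det_ublock -scaleN1r detZ => ->.
Qed.

(* A matrix with nonzero determinant has a nonzero diagonal along some
   permutation (some term of the Leibniz expansion survives). *)
Lemma det_neq0_perm (F : comPzRingType) (k : nat) (M : 'M[F]_k) :
  \det M != 0 -> exists s : 'S_k, forall i, M i (s i) != 0.
Proof.
move=> detM; have : [exists s : 'S_k, [forall i, M i (s i) != 0]].
  apply: contraR detM => /existsPn no_perm; apply/eqP.
  rewrite /determinant big1 // => s _.
  have /forallPn[i /negPn/eqP Mi0] := no_perm s.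
  by rewrite (bigD1 i) //= Mi0 mul0r mulr0.
by case/existsP => s /forallP; exists s.
Qed.

Lemma covariance_transport (R : realFieldType) (m : nat) (L O : 'M[R]_m) :
  (1%:M - L) \in unitmx -> (1%:M - L)^T *m phiG L O = O *m invmx (1%:M - L).
Proof.
by move=> unitA; rewrite /phiG !mulmxA -trmx_mul mulVmx // trmx1 mul1mx.
Qed.

Lemma Jmat_factor (R : realFieldType) (m : nat) (D : rel 'I_m) (v : 'I_m)
    (Y : {set 'I_m}) (L O : 'M[R]_m) :
  (1%:M - L) \in unitmx ->
  Jmat D v Y L O = rowsub (enum_at v Y) O *m invmx (1%:M - L)
                     *m colsub (enum_at v (pa D v)) 1%:M.
Proof.
move=> unitA; rewrite -mulmxA mulmx_colsub mulmx1 -mxsub_mul.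
by rewrite -covariance_transport //; apply/matrixP => i j; rewrite !mxE.
Qed.

(* The support of the block matrix [[I - L, E], [W, 0]] at a point of Theta
   follows the graph, so a permutation inside this support satisfies the
   hypotheses of halftrek_system_of_permutation with P = pa(v). *)
Section SupportAtThetaPoint.

Variables (R : realFieldType) (m : nat) (D B : rel 'I_m) (v : 'I_m).
Variables (Y : {set 'I_m}) (L O : 'M[R]_m).
Hypothesis L_pattern : forall a b, ~~ D a b -> L a b = 0.
Hypothesis O_pattern : forall a b, a != b -> ~~ B a b -> O a b = 0.

Let n := #|pa D v|.

Definition support_block : 'M[R]_(m + n) :=
  block_mx (1%:M - L) (colsub (enum_at v (pa D v)) 1%:M)
           (rowsub (enum_at v Y) O) 0.

Variable s : {perm 'I_(m + n)}.
Hypothesis s_support : forall i, support_block i (s i) != 0.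

Lemma support_upper (x x' : 'I_m) :
  s (lshift n x) = lshift n x' -> x = x' \/ D x x'.
Proof.
move=> Es; have := s_support (lshift n x).
rewrite Es /support_block block_mxEul !mxE => Axx'.
case: (eqVneq x x') Axx' => [-> _|x'x Axx']; [by left | right].
by move: Axx'; rewrite sub0r oppr_eq0; apply: contraNT => /L_pattern ->.
Qed.

Lemma support_leave (x : 'I_m) (j : 'I_n) :
  s (lshift n x) = rshift m j -> x \in pa D v.
Proof.
move=> Es; have := s_support (lshift n x).
rewrite Es /support_block block_mxEur !mxE.
case: (eqVneq x (enum_at v (pa D v) j)) => [-> _|_]; last by rewrite eqxx.
by rewrite /enum_at -mem_enum mem_nth // -cardE ltn_ord.
Qed.

Lemma support_enter (j : 'I_n) : exists2 x : 'I_m,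
  s (rshift m j) = lshift n x &
  (x == enum_at v Y j) || B (enum_at v Y j) x.
Proof.
have := s_support (rshift m j); rewrite /support_block.
case: (split_ordP (s (rshift m j))) => [x -> | j' ->]; last first.
  by rewrite block_mxEdr mxE eqxx.
rewrite block_mxEdl mxE => Ojx; exists x => //.
apply: contraR Ojx; rewrite negb_or eq_sym => /andP[jx nB].
by rewrite O_pattern.
Qed.

End SupportAtThetaPoint.

Lemma nonsingular_point (R : realFieldType) (m : nat) (D B : rel 'I_m)
    (v : 'I_m) (Y : {set 'I_m}) :
  generically_invertible_J R D B v Y ->
  exists L O : 'M[R]_m, Theta D B L O /\ \det (Jmat D v Y L O) != 0.
Proof.
move=> genJ; apply: NNPP => no_point; apply: genJ => L O LO_Theta.
by apply/eqP; apply/negPn/negP => detJ; apply: no_point; exists L, O.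
Qed.

Theorem mainTheorem14 (R : realFieldType) (m : nat) (D B : rel 'I_m)
    (v : 'I_m) (Y : {set 'I_m}) :
  mixed_graph D B ->
  Y \subset ~: (v |: sib B v) ->
  #|Y| = #|pa D v| ->
  generically_invertible_J R D B v Y ->
  htc D B Y v.
Proof.
move=> _ Y_avoids cardY.
case/nonsingular_point=> L [O [[[L_pattern unitA] [_ O_pattern _]]]].
rewrite Jmat_factor // => detJ.
have det_block : \det (support_block D v Y L O) != 0.
  rewrite det_block_schur // !mulf_neq0 ?expf_neq0 ?oppr_eq0 ?oner_eq0 //.
  by rewrite unitmxE unitfE in unitA.
have [s s_support] := det_neq0_perm det_block.
split=> //.
  by apply/eqP; rewrite setI_eq0 disjoints_subset; exact: Y_avoids.
apply: (halftrek_system_of_permutation cardY erefl (s := s)).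
- exact: support_upper s_support.
- exact: support_leave s_support.
- exact: support_enter s_support.
Qed.
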